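(* Let $\lambda\in(0,1)$, put $k=1/\sqrt\lambda$, and assume $D(k)\neq0$, where $D(k)=-(1-k)^2e^{-(1+k)}-(1-k)^2e^{1+k}+(1+k)^2e^{k-1}+(1+k)^2e^{1-k}-8k$. Let $(y,z,p_y,p_z)$ be any solution on $[0,1]$ of the regularized Pontryagin system $$\lambda\dot y=p_y+p_z-\lambda y,\quad \lambda\dot z=p_y+p_z,\quad \dot p_y=p_y-z+2y,\quad \dot p_z=z-y,$$ with boundary conditions $y(0)=z(0)=0$, $y(1)=0$, $z(1)=1$. Then $x:=z-y$ coincides on $[0,1]$ with the unique function of the form $a e^{t}+b e^{-t}+c e^{t/\sqrt\lambda}+d e^{-t/\sqrt\lambda}$ satisfying $x(0)=0$, $x(1)=1$, $\dot x(0)=\dot x(1)=0$. That is, the regular optimal trajectory equals the exponential-ansatz shortcut-to-adiabaticity trajectory with $k=1/\sqrt\lambda$.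
   Context: The regularized Pontryagin system is the extremal system of the optimal control problem $\dot y=v-y$, $\dot z=v$, minimize $\int_0^1[(z-y)^2+y^2+\lambda v^2]dt$, with optimal control $v_R=(p_y+p_z)/\lambda$; here $y=\dot x$, $z=u$ for the dynamics $\dot x+x=u$. *)

From Stdlib Require Import Reals Lra.
Open Scope R_scope.

Definition Dk (k : R) : R :=
  - (1 - k) ^ 2 * exp (- (1 + k)) - (1 - k) ^ 2 * exp (1 + k)
  + (1 + k) ^ 2 * exp (k - 1) + (1 + k) ^ 2 * exp (1 - k) - 8 * k.

Definition ansatz (k a b c d : R) (t : R) : R :=
  a * exp t + b * exp (- t) + c * exp (k * t) + d * exp (- (k * t)).

Definition ansatz_bc (k a b c d : R) : Prop :=
  ansatz k a b c d 0 = 0 /\ ansatz k a b c d 1 = 1 /\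
  derivable_pt_lim (ansatz k a b c d) 0 0 /\
  derivable_pt_lim (ansatz k a b c d) 1 0.

(* The Pontryagin system is linear with constant coefficients; in terms of
   m = 1/lam = k^2 its matrix has eigenvalues 1, -1, k, -k.  Pairing the state
   (y, z, py, pz) with a left eigenvector for eigenvalue r gives a scalar
   function solving phi' = r phi, hence a multiple of exp (r t).  Solving the
   four resulting identities for z - y and y shows that x = z - y is an
   exponential ansatz with x' = y, so the boundary conditions of the system are
   exactly those of the ansatz.  Uniqueness: the homogeneous boundary problem
   for the ansatz is a 4x4 linear system whose determinant is a nonzero
   multiple of D(k). *)

From Stdlib Require Import Reals Lra.
From Coquelicot Require Import Coquelicot.
Open Scope R_scope.

Lemma derivable_pt_lim_eq (f : R -> R) (x l l' : R) :
  derivable_pt_lim f x l -> l = l' -> derivable_pt_lim f x l'.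
Proof. now intros H <-. Qed.

Lemma derive_zero_const (g : R -> R) (T : R) :
  (forall t, 0 <= t <= T -> derivable_pt_lim g t 0) ->
  forall t, 0 <= t <= T -> g t = g 0.
Proof.
intros H t Ht.
destruct (Req_dec t 0) as [->|Hn]; [reflexivity|].
symmetry; apply (eq_is_derive g 0 t); [|lra].
intros s Hs; apply is_derive_Reals, H; lra.
Qed.

Lemma derive_linear_exp (phi : R -> R) (r T : R) :
  (forall t, 0 <= t <= T -> derivable_pt_lim phi t (r * phi t)) ->
  forall t, 0 <= t <= T -> phi t = phi 0 * exp (r * t).
Proof.
intros H t Ht.
assert (Hconst : forall s, 0 <= s <= T ->
  derivable_pt_lim (fun s => phi s * exp (- (r * s))) s 0).
{ intros s Hs; apply is_derive_Reals.
  replace 0 with (r * phi s * exp (- (r * s)) + phi s * (- r * exp (- (r * s))))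
    by ring.
  apply (is_derive_mult phi (fun s => exp (- (r * s)))).
  - now apply is_derive_Reals, H.
  - auto_derive; [easy | ring].
  - intros; apply Rmult_comm. }
assert (Hg := derive_zero_const _ T Hconst t Ht); simpl in Hg.
rewrite Rmult_0_r, Ropp_0, exp_0, Rmult_1_r in Hg.
rewrite <- Hg, Rmult_assoc, <- exp_plus.
replace (- (r * t) + r * t) with 0 by ring.
rewrite exp_0; ring.
Qed.

Definition ansatz_deriv (k a b c d : R) (t : R) : R :=
  a * exp t - b * exp (- t) + k * c * exp (k * t) - k * d * exp (- (k * t)).

Lemma derivable_pt_lim_ansatz (k a b c d t : R) :
  derivable_pt_lim (ansatz k a b c d) t (ansatz_deriv k a b c d t).
Proof.
apply is_derive_Reals; unfold ansatz, ansatz_deriv.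
auto_derive; [easy | ring].
Qed.

Lemma ansatz_bc_linear_system (k a b c d : R) :
  ansatz_bc k a b c d ->
  a + b + c + d = 0 /\
  a * exp 1 + b / exp 1 + c * exp k + d / exp k = 1 /\
  a - b + k * c - k * d = 0 /\
  a * exp 1 - b / exp 1 + k * c * exp k - k * d / exp k = 0.
Proof.
intros (H0 & H1 & H0' & H1').
apply (uniqueness_limite _ _ _ _ (derivable_pt_lim_ansatz k a b c d 0)) in H0'.
apply (uniqueness_limite _ _ _ _ (derivable_pt_lim_ansatz k a b c d 1)) in H1'.
unfold ansatz, ansatz_deriv, Rdiv in *.
rewrite Rmult_0_r, Ropp_0, exp_0 in H0, H0'.
rewrite Rmult_1_r, !exp_Ropp in H1, H1'.
lra.
Qed.

Lemma Dk_exp (k : R) :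
  Dk k = - (1 - k) ^ 2 * (/ (exp 1 * exp k) + exp 1 * exp k)
         + (1 + k) ^ 2 * (exp k / exp 1 + exp 1 / exp k) - 8 * k.
Proof.
unfold Dk, Rminus, Rdiv.
rewrite !exp_plus, !exp_Ropp, exp_plus.
ring.
Qed.

Lemma ansatz_homogeneous_bc_trivial (k a b c d : R) :
  Dk k <> 0 ->
  a + b + c + d = 0 ->
  a * exp 1 + b / exp 1 + c * exp k + d / exp k = 0 ->
  a - b + k * c - k * d = 0 ->
  a * exp 1 - b / exp 1 + k * c * exp k - k * d / exp k = 0 ->
  a = 0 /\ b = 0 /\ c = 0 /\ d = 0.
Proof.
rewrite Dk_exp.
set (E := exp 1); set (F := exp k).
assert (HE : 0 < E) by apply exp_pos; assert (HF : 0 < F) by apply exp_pos.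
intros HD e0 e1 e0' e1'.
(* Eliminating a and b with the conditions at 0 leaves a 2x2 system in (c, d)
   whose determinant is 2 D(k). *)
assert (ha : 2 * a = - ((1 + k) * c + (1 - k) * d)) by lra.
assert (hb : 2 * b = - ((1 - k) * c + (1 + k) * d)) by lra.
set (P := - (1 + k) * E - (1 - k) / E + 2 * F).
set (Q := - (1 - k) * E - (1 + k) / E + 2 / F).
set (R := - (1 + k) * E + (1 - k) / E + 2 * k * F).
set (S := - (1 - k) * E + (1 + k) / E - 2 * k / F).
assert (hPQ : P * c + Q * d = 0).
{ transitivity (E * (2 * a) + (2 * b) / E + 2 * F * c + 2 * d / F).
  - rewrite ha, hb; unfold P, Q; field; lra.
  - replace (E * (2 * a) + (2 * b) / E + 2 * F * c + 2 * d / F)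
      with (2 * (a * E + b / E + c * F + d / F)) by (field; lra).
    rewrite e1; ring. }
assert (hRS : R * c + S * d = 0).
{ transitivity (E * (2 * a) - (2 * b) / E + 2 * k * F * c - 2 * k * d / F).
  - rewrite ha, hb; unfold R, S; field; lra.
  - replace (E * (2 * a) - (2 * b) / E + 2 * k * F * c - 2 * k * d / F)
      with (2 * (a * E - b / E + k * c * F - k * d / F)) by (field; lra).
    rewrite e1'; ring. }
set (Dk' := - (1 - k) ^ 2 * (/ (E * F) + E * F) + (1 + k) ^ 2 * (F / E + E / F) - 8 * k)
  in HD.
assert (hdet : P * S - Q * R = 2 * Dk') by (unfold P, Q, R, S, Dk'; field; lra).
assert (hc : (2 * Dk') * c = 0).
{ rewrite <- hdet.
  replace ((P * S - Q * R) * c) with (S * (P * c + Q * d) - Q * (R * c + S * d)) by ring.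
  rewrite hPQ, hRS; ring. }
assert (hd : (2 * Dk') * d = 0).
{ rewrite <- hdet.
  replace ((P * S - Q * R) * d) with (P * (R * c + S * d) - R * (P * c + Q * d)) by ring.
  rewrite hPQ, hRS; ring. }
apply Rmult_integral in hc as [hc|hc]; [lra|].
apply Rmult_integral in hd as [hd|hd]; [lra|].
subst c d; lra.
Qed.

Lemma ansatz_bc_unique (k a b c d a' b' c' d' : R) :
  Dk k <> 0 -> ansatz_bc k a b c d -> ansatz_bc k a' b' c' d' ->
  a' = a /\ b' = b /\ c' = c /\ d' = d.
Proof.
intros HD H H'.
apply ansatz_bc_linear_system in H as (e0 & e1 & e0' & e1').
apply ansatz_bc_linear_system in H' as (f0 & f1 & f0' & f1').
destruct (ansatz_homogeneous_bc_trivial k (a' - a) (b' - b) (c' - c) (d' - d) HD)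
  as (? & ? & ? & ?); unfold Rdiv in *; try lra.
Qed.

Section RegularizedPontryagin.

Variables (k : R) (y z py pz : R -> R).

Hypothesis system : forall t, 0 <= t <= 1 ->
  derivable_pt_lim y t (k * k * (py t + pz t) - y t) /\
  derivable_pt_lim z t (k * k * (py t + pz t)) /\
  derivable_pt_lim py t (py t - z t + 2 * y t) /\
  derivable_pt_lim pz t (z t - y t).

Definition state_pairing (w1 w2 w3 w4 : R) (t : R) : R :=
  w1 * y t + w2 * z t + w3 * py t + w4 * pz t.

Lemma state_pairing_eigen_exp (w1 w2 w3 w4 r : R) :
  - w1 + 2 * w3 - w4 = r * w1 ->
  - w3 + w4 = r * w2 ->
  k * k * (w1 + w2) + w3 = r * w3 ->
  k * k * (w1 + w2) = r * w4 ->
  forall t, 0 <= t <= 1 ->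
  state_pairing w1 w2 w3 w4 t = state_pairing w1 w2 w3 w4 0 * exp (r * t).
Proof.
intros c1 c2 c3 c4; apply derive_linear_exp; intros t Ht.
destruct (system t Ht) as (Hy & Hz & Hpy & Hpz).
apply is_derive_Reals in Hy, Hz, Hpy, Hpz.
apply is_derive_Reals; unfold state_pairing.
replace (r * _) with (w1 * (k * k * (py t + pz t) - y t) + w2 * (k * k * (py t + pz t))
  + w3 * (py t - z t + 2 * y t) + w4 * (z t - y t)).
- repeat apply @is_derive_plus; apply @is_derive_scal; assumption.
- replace (r * _) with
    (r * w1 * y t + r * w2 * z t + r * w3 * py t + r * w4 * pz t) by ring.
  rewrite <- c1, <- c2, <- c3, <- c4; ring.
Qed.

Hypothesis k2_neq_1 : k * k <> 1.

Lemma trajectory_ansatz : exists a b c d : R, forall t, 0 <= t <= 1 ->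
  z t - y t = ansatz k a b c d t /\ y t = ansatz_deriv k a b c d t.
Proof.
(* Left eigenvectors for the eigenvalues 1, -1, k and -k. *)
assert (P1 := state_pairing_eigen_exp 1 (-1) 1 0 1
  ltac:(ring) ltac:(ring) ltac:(ring) ltac:(ring)).
assert (Pm1 := state_pairing_eigen_exp (k * k - 2) (- (k * k)) (k * k) (2 * (k * k)) (-1)
  ltac:(ring) ltac:(ring) ltac:(ring) ltac:(ring)).
assert (Pk := state_pairing_eigen_exp k (-1) (k * k) (k * (k - 1)) k
  ltac:(ring) ltac:(ring) ltac:(ring) ltac:(ring)).
assert (Pmk := state_pairing_eigen_exp (- k) (-1) (k * k) (k * (k + 1)) (- k)
  ltac:(ring) ltac:(ring) ltac:(ring) ltac:(ring)).
assert (Hk : k * k - 1 <> 0) by lra.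
set (s := / (2 * (k * k - 1))).
exists (- (k * k) * s * state_pairing 1 (-1) 1 0 0),
       (- s * state_pairing (k * k - 2) (- (k * k)) (k * k) (2 * (k * k)) 0),
       (s * state_pairing k (-1) (k * k) (k * (k - 1)) 0),
       (s * state_pairing (- k) (-1) (k * k) (k * (k + 1)) 0).
intros t Ht; unfold ansatz, ansatz_deriv.
replace (exp t) with (exp (1 * t)) by (f_equal; ring).
replace (exp (- t)) with (exp (-1 * t)) by (f_equal; ring).
replace (exp (- (k * t))) with (exp (- k * t)) by (f_equal; ring).
rewrite !Rmult_assoc, <- P1, <- Pm1, <- Pk, <- Pmk by exact Ht.
unfold state_pairing, s; split; field; exact Hk.
Qed.

End RegularizedPontryagin.

Theorem mainTheorem6 (lam : R) (y z py pz : R -> R) :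
  0 < lam < 1 ->
  Dk (/ sqrt lam) <> 0 ->
  (forall t, 0 <= t <= 1 ->
     derivable_pt_lim y t ((py t + pz t - lam * y t) / lam) /\
     derivable_pt_lim z t ((py t + pz t) / lam) /\
     derivable_pt_lim py t (py t - z t + 2 * y t) /\
     derivable_pt_lim pz t (z t - y t)) ->
  y 0 = 0 -> z 0 = 0 -> y 1 = 0 -> z 1 = 1 ->
  exists a b c d : R,
    ansatz_bc (/ sqrt lam) a b c d /\
    (forall a' b' c' d', ansatz_bc (/ sqrt lam) a' b' c' d' ->
       a' = a /\ b' = b /\ c' = c /\ d' = d) /\
    (forall t, 0 <= t <= 1 -> z t - y t = ansatz (/ sqrt lam) a b c d t).
Proof.
intros Hlam HD Hsys y0 z0 y1 z1.
set (k := / sqrt lam) in *.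
assert (Hsqrt : 0 < sqrt lam) by (apply sqrt_lt_R0; lra).
assert (Hkk : k * k = / lam).
{ unfold k; rewrite <- Rinv_mult, sqrt_sqrt; [reflexivity | lra]. }
assert (Hkk1 : k * k <> 1).
{ rewrite Hkk; intros H.
  assert (lam = 1) by (rewrite <- (Rinv_inv lam), H; apply Rinv_1); lra. }
destruct (trajectory_ansatz k y z py pz) as (a & b & c & d & Hx); [|exact Hkk1|].
{ intros t Ht; destruct (Hsys t Ht) as (Hy & Hz & Hpy & Hpz).
  rewrite Hkk; repeat split; try assumption;
    (eapply derivable_pt_lim_eq; [eassumption | field; lra]). }
assert (Hbc : ansatz_bc k a b c d).
{ destruct (Hx 0 ltac:(lra)) as (Hx0 & Hy0), (Hx 1 ltac:(lra)) as (Hx1 & Hy1).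
  repeat split; [lra | lra | |];
    (eapply derivable_pt_lim_eq; [apply derivable_pt_lim_ansatz | lra]). }
exists a, b, c, d; split; [exact Hbc | split].
- intros a' b' c' d' H'; now apply (ansatz_bc_unique k a b c d).
- intros t Ht; apply Hx, Ht.
Qed.
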